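(* Let $H$ be a real Hilbert space and $\{C_\alpha\}_{\alpha\in\Omega}$ ($|\Omega|\ge2$) a family of closed convex subsets of $H$ whose intersection $C=\bigcap_\alpha C_\alpha$ is nonempty and has affine hull dense in $H$. Then for every starting element $x_0\in H$ and every sequence $\{t_n\}\subset[0,1]$ of weakness parameters, every sequence $\{x_n\}$ of remote projections onto $\{C_\alpha\}$ converges weakly.
   Context: $P_\alpha$ is the metric projection onto $C_\alpha$. A sequence of remote projections with weakness parameters $t_n\in[0,1]$ starting at $x_0$: $x_{n+1}=P_{\alpha(n)}x_n$, where $\alpha(n)\in\Omega$ is any index with $\mathrm{dist}(x_n,C_{\alpha(n)})\ge t_n\sup_\alpha\mathrm{dist}(x_n,C_\alpha)$; if $t_n=1$ for some $n$ it is required that $\max_\alpha\mathrm{dist}(x,C_\alpha)$ is attained for every $x\in H$. *)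

From HB Require Import structures.
From mathcomp Require Import all_boot all_order all_algebra.
From mathcomp Require Import all_classical all_reals all_analysis.
Set Implicit Arguments. Unset Strict Implicit. Unset Printing Implicit Defensive.
Import Order.TTheory GRing.Theory Num.Theory.
Import numFieldNormedType.Exports.
Local Open Scope classical_set_scope.
Local Open Scope ring_scope.

Definition is_inner_product (R : realType) (H : normedModType R)
  (ip : H -> H -> R) : Prop :=
  [/\ forall x y, ip x y = ip y x,
      forall a x y z, ip (a *: x + y) z = a * ip x z + ip y z &
      forall x, ip x x = `|x| ^+ 2].

Definition convex_subset (R : realType) (H : normedModType R) (A : set H) :=
  forall x y (l : R), A x -> A y -> 0 <= l -> l <= 1 ->
    A (l *: x + (1 - l) *: y).

Definition affine_hull (R : realType) (H : normedModType R) (A : set H) : set H :=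
  [set z | exists (n : nat) (p : 'I_n -> H) (w : 'I_n -> R),
     [/\ forall i, A (p i), \sum_(i < n) w i = 1 &
         z = \sum_(i < n) w i *: p i]].

Definition dist_set (R : realType) (H : normedModType R) (x : H) (A : set H) : R :=
  inf [set `|x - y| | y in A].

Definition is_metric_proj (R : realType) (H : normedModType R)
  (A : set H) (x p : H) : Prop :=
  A p /\ forall y, A y -> `|x - p| <= `|x - y|.

Definition sup_dist (R : realType) (H : normedModType R) (Omega : Type)
  (C : Omega -> set H) (x : H) : R :=
  sup [set dist_set x (C a) | a in [set: Omega]].

Definition remote_projections (R : realType) (H : normedModType R)
  (Omega : Type) (C : Omega -> set H) (t : nat -> R) (x0 : H)
  (x : nat -> H) : Prop :=
  [/\ forall n, 0 <= t n <= 1,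
      (exists n, t n = 1) ->
        (forall y : H, exists a, dist_set y (C a) = sup_dist C y),
      x 0%N = x0 &
      exists alpha : nat -> Omega, forall n,
        t n * sup_dist C (x n) <= dist_set (x n) (C (alpha n)) /\
        is_metric_proj (C (alpha n)) (x n) (x n.+1)].

Definition weakly_converges (R : realType) (H : normedModType R)
  (ip : H -> H -> R) (x : nat -> H) : Prop :=
  exists l : H, forall y : H, (fun n => ip (x n) y) @ \oo --> ip l y.

From HB Require Import structures.
From mathcomp Require Import all_boot all_order all_algebra.
From mathcomp Require Import all_classical all_reals all_analysis.
From mathcomp Require Import ring lra.
Import Order.TTheory GRing.Theory Num.Theory.
Import numFieldNormedType.Exports.
Local Open Scope classical_set_scope.
Local Open Scope ring_scope.
Set Implicit Arguments. Unset Strict Implicit.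

(* Every remote projection is a metric projection onto a closed convex set
   containing C = \bigcap_a C a, so the iterates are Fejer monotone:
   |x_(n+1) - c| <= |x_n - c| for all c in C.  Hence |x_n - c| converges for
   every c in C and, by polarization, so does <x_n, c - c'> for c, c' in C;
   by linearity <x_n, y> converges for y in (aff C) - c0, which is dense, and
   since (x_n) is bounded it converges for every y.  The limit is a bounded
   linear functional, i.e. <l, .> by the Riesz representation theorem, and
   l is the weak limit.  Neither the remoteness of the chosen sets nor
   |Omega| >= 2 plays any role. *)

Section InnerProduct.
Variables (R : realType) (H : normedModType R) (ip : H -> H -> R).
Hypothesis hip : is_inner_product ip.

Lemma ipC x y : ip x y = ip y x. Proof. by case: hip. Qed.

Lemma ipDl x y z : ip (x + y) z = ip x z + ip y z.
Proof. by case: hip => _ /(_ 1 x y z); rewrite scale1r mul1r. Qed.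

Lemma ip0l z : ip 0 z = 0.
Proof. by have := ipDl 0 0 z; rewrite addr0; lra. Qed.

Lemma ipZl a x z : ip (a *: x) z = a * ip x z.
Proof. by case: hip => _ /(_ a x 0 z); rewrite addr0 ip0l addr0. Qed.

Lemma ipnorm x : ip x x = `|x| ^+ 2. Proof. by case: hip. Qed.

Lemma ipNl x z : ip (- x) z = - ip x z.
Proof. by rewrite -scaleN1r ipZl mulN1r. Qed.

Lemma ipBl x y z : ip (x - y) z = ip x z - ip y z.
Proof. by rewrite ipDl ipNl. Qed.

Lemma ip0r z : ip z 0 = 0. Proof. by rewrite ipC ip0l. Qed.

Lemma ipDr x y z : ip z (x + y) = ip z x + ip z y.
Proof. by rewrite ipC ipDl !(ipC z). Qed.

Lemma ipZr a x z : ip z (a *: x) = a * ip z x.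
Proof. by rewrite ipC ipZl ipC. Qed.

Lemma ipNr x z : ip z (- x) = - ip z x.
Proof. by rewrite ipC ipNl ipC. Qed.

Lemma ipBr x y z : ip z (x - y) = ip z x - ip z y.
Proof. by rewrite ipDr ipNr. Qed.

Lemma normD_sqr x y : `|x + y| ^+ 2 = `|x| ^+ 2 + 2 * ip x y + `|y| ^+ 2.
Proof. by rewrite -!ipnorm ipDl !ipDr (ipC y x); ring. Qed.

Lemma normB_sqr x y : `|x - y| ^+ 2 = `|x| ^+ 2 - 2 * ip x y + `|y| ^+ 2.
Proof. by rewrite -!ipnorm ipBl !ipBr (ipC y x); ring. Qed.

Lemma parallelogram (x y : H) :
  `|x - y| ^+ 2 = 2 * `|x| ^+ 2 + 2 * `|y| ^+ 2 - `|x + y| ^+ 2.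
Proof. by rewrite normB_sqr normD_sqr; ring. Qed.

Lemma normZ_sqr (a : R) (x : H) : `|a *: x| ^+ 2 = a ^+ 2 * `|x| ^+ 2.
Proof. by rewrite normrZ exprMn real_normK ?num_real. Qed.

Lemma cauchy_schwarz x y : `|ip x y| <= `|x| * `|y|.
Proof.
have [->|y0] := eqVneq y 0; first by rewrite ip0r !normr0 mulr0.
rewrite -(ler_pXn2r (n := 2)) ?nnegrE ?mulr_ge0 // real_normK ?num_real //.
set B := ip x y; set D := `|y| ^+ 2.
have D0 : 0 < D by rewrite exprn_gt0 ?normr_gt0.
(* 0 <= |x - (B / D) y|^2 = |x|^2 - B^2 / D *)
have := exprn_ge0 2 (normr_ge0 (x - (B / D) *: y)).
rewrite normB_sqr ipZr normZ_sqr -/B -/D.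
have -> : `|x| ^+ 2 - 2 * (B / D * B) + (B / D) ^+ 2 * D = `|x| ^+ 2 - B ^+ 2 / D.
  by field; rewrite gt_eqF.
by rewrite subr_ge0 ler_pdivrMr // exprMn.
Qed.

Lemma near_minimal_norm_close (u v : H) (d a b : R) :
  0 <= d -> 0 < b -> b <= a -> a <= 1 -> `|u| < d + a -> `|v| < d + b ->
  2 * d <= `|u + v| -> `|u - v| ^+ 2 < (8 * d + 4) * a.
Proof.
move=> d0 b0 ba a1 ud vd uvd; rewrite parallelogram.
have hu : `|u| ^+ 2 < (d + a) ^+ 2 by rewrite ltr_pXn2r ?nnegrE //; lra.
have hv : `|v| ^+ 2 < (d + b) ^+ 2 by rewrite ltr_pXn2r ?nnegrE //; lra.
have huv : (2 * d) ^+ 2 <= `|u + v| ^+ 2 by rewrite ler_pXn2r ?nnegrE //; lra.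
nra.
Qed.

Lemma metric_proj_obtuse (A : set H) (x p c : H) :
  convex_subset A -> is_metric_proj A x p -> A c -> ip (x - p) (c - p) <= 0.
Proof.
move=> cvxA [Ap pmin] Ac.
set B := ip (x - p) (c - p); set D := `|c - p| ^+ 2.
have D0 : 0 <= D by rewrite exprn_ge0.
have step l : 0 < l -> l <= 1 -> 2 * B <= l * D.
  move=> l0 l1; have := pmin _ (cvxA c p l Ac Ap (ltW l0) l1).
  have -> : x - (l *: c + (1 - l) *: p) = (x - p) - l *: (c - p).
    by rewrite scalerBl scale1r scalerBr !opprD !opprK !addrA (addrAC x).
  rewrite -(ler_pXn2r (n := 2)) ?nnegrE //.
  by rewrite [in X in _ <= X]normB_sqr ipZr normZ_sqr -/B -/D; nra.
(* if B > 0, the step l = B / (B + D) gives 2 B <= B D / (B + D) < B *)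
rewrite leNgt; apply/negP => B0.
have BD : 0 < B + D by lra.
have l0 : 0 < B / (B + D) by rewrite divr_gt0.
have l1 : B / (B + D) <= 1 by rewrite ler_pdivrMr // mul1r; lra.
have e : B / (B + D) * (B + D) = B by rewrite divfK ?lt0r_neq0.
have := step _ l0 l1; nra.
Qed.

Lemma metric_proj_fejer (A : set H) (x p c : H) :
  convex_subset A -> is_metric_proj A x p -> A c -> `|p - c| <= `|x - c|.
Proof.
move=> cvxA xp Ac; have obtuse := metric_proj_obtuse cvxA xp Ac.
rewrite -(ler_pXn2r (n := 2)) ?nnegrE //.
have -> : x - c = (x - p) - (c - p) by rewrite opprB addrA subrK.
rewrite [X in _ <= X]normB_sqr (distrC p c).
have := exprn_ge0 2 (normr_ge0 (x - p)); lra.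
Qed.

End InnerProduct.

Lemma cauchy_cvgn (R : realType) (V : completeNormedModType R) (u : nat -> V) :
  (forall e, 0 < e -> exists N, forall n, (N <= n)%N -> `|u N - u n| < e) ->
  cvgn u.
Proof.
move=> uC; apply: cauchy_cvg; apply: cauchy_exP => e e0.
have [N uN] := uC e e0; exists (u N), N => // n /= Nn.
by rewrite -ball_normE; exact: uN.
Qed.

Lemma exists_harmonic_lt (R : realType) (q : R) : 0 < q -> exists N, harmonic N < q.
Proof.
move=> q0; have [N _ hN] := cvgr_dist_lt _ _ (@cvg_harmonic R) _ q0.
exists N; have := hN N (leqnn N).
by rewrite sub0r normrN ger0_norm // harmonic_ge0.
Qed.

Section LinearFunctional.
Variables (R : realType) (H : normedModType R) (f : H -> R).
Hypothesis flin : forall a y z, f (a *: y + z) = a * f y + f z.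

Lemma linfun0 : f 0 = 0.
Proof. by have := flin 1 0 0; rewrite scaler0 addr0 mul1r; lra. Qed.

Lemma linfunZ a y : f (a *: y) = a * f y.
Proof. by have := flin a y 0; rewrite addr0 linfun0 addr0. Qed.

Lemma linfunD y z : f (y + z) = f y + f z.
Proof. by have := flin 1 y z; rewrite scale1r mul1r. Qed.

Lemma linfunB y z : f (y - z) = f y - f z.
Proof. by rewrite linfunD -scaleN1r linfunZ mulN1r. Qed.

Lemma convex_linfun_level a : convex_subset [set y | f y = a].
Proof. by move=> y z l /= fy fz _ _; rewrite linfunD !linfunZ fy fz; ring. Qed.

Variable M : R.
Hypothesis fM : forall y, `|f y| <= M * `|y|.

Lemma bounded_linfun_continuous : continuous f.
Proof.
move=> y; apply/cvgrPdist_lt => e e0.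
have M1 : 0 < `|M| + 1 by rewrite ltr_wpDl.
have /cvgr_dist_lt/(_ (e / (`|M| + 1))) : id @ y --> y by exact: cvg_id.
rewrite divr_gt0 // => /(_ isT); apply: filterS => z yz.
rewrite -linfunB; apply: le_lt_trans (fM _) _.
have : `|y - z| * (`|M| + 1) < e by rewrite -ltr_pdivlMr.
have := ler_norm M; have := normr_ge0 (y - z); nra.
Qed.

Lemma closed_linfun_level a : closed [set y | f y = a].
Proof.
apply: (preimage_closed (D := [set b | b = a])); last exact: closed_eq.
by move=> y _; exact: bounded_linfun_continuous.
Qed.

End LinearFunctional.

Section Riesz.
Variables (R : realType) (H : completeNormedModType R) (ip : H -> H -> R).
Hypothesis hip : is_inner_product ip.

Lemma min_norm_exists (A : set H) : convex_subset A -> closed A -> A !=set0 ->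
  exists2 m, A m & forall y, A y -> `|m| <= `|y|.
Proof.
move=> cvxA clA [y0 Ay0].
pose d := inf [set `|y| | y in A].
have d_le y : A y -> d <= `|y|.
  by move=> Ay; apply: ge_inf; [exists 0 => _ [z _ <-] | exists y].
have d0 : 0 <= d by apply: lb_le_inf => [|_ [y _ <-]]; [exists `|y0|, y0|].
have /choice [u hu] : forall k, exists y, A y /\ `|y| < d + harmonic k.
  move=> k.
  have : d < d + harmonic k by rewrite ltrDl harmonic_gt0.
  by move=> /inf_lt [|_ [y Ay <-] ?]; [exists `|y0|, y0 | exists y].
have mid k l : 2 * d <= `|u k + u l|.
  have half : 1 - 2^-1 = 2^-1 :> R by field.
  have := d_le _ (cvxA _ _ 2^-1 (hu k).1 (hu l).1 _ _).
  by rewrite half -scalerDr normrZ ger0_norm; lra.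
have cu : cvgn u.
  apply: cauchy_cvgn => e e0.
  have q0 : 0 < e ^+ 2 / (8 * d + 4) by rewrite divr_gt0 ?exprn_gt0 //; lra.
  have [N hN] := exists_harmonic_lt q0.
  exists N => n Nn; rewrite -(ltr_pXn2r (n := 2)) ?nnegrE ?(ltW e0) //.
  have hn : harmonic n <= harmonic N :> R by rewrite /= lef_pV2 ?posrE // ler_nat.
  have h1 : harmonic N <= 1 :> R by rewrite /= invf_le1 ?ler1n.
  apply: lt_le_trans (near_minimal_norm_close hip d0 (harmonic_gt0 n) hn h1
    (hu N).2 (hu n).2 (mid N n)) _.
  by rewrite mulrC -ler_pdivlMr ?ltW //; lra.
pose m := lim (u @ \oo); have um : u @ \oo --> m := cu.
exists m; first by apply: (closed_cvg _ clA _ _ um); near=> k; exact: (hu k).1.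
move=> y Ay; apply: le_trans (d_le _ Ay).
have hd : (fun k => d + harmonic k) @ \oo --> d.
  by rewrite -[X in _ --> X]addr0; apply: cvgD; [exact: cvg_cst | exact: cvg_harmonic].
rewrite -(cvg_lim _ (cvg_norm um)) // -(cvg_lim _ hd) //.
apply: ler_lim; [exact: (cvgP _ (cvg_norm um)) | exact: (cvgP _ hd) | ].
by near=> k; apply: ltW; have [] := hu k.
Unshelve. all: by end_near.
Qed.

Lemma riesz_representation (f : H -> R) (M : R) :
  (forall a y z, f (a *: y + z) = a * f y + f z) ->
  (forall y, `|f y| <= M * `|y|) -> exists l, forall y, f y = ip l y.
Proof.
move=> flin fM.
have [f0|/existsNP [e fe]] := pselect (forall y, f y = 0).
  by exists 0 => y; rewrite f0 (ip0l hip).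
pose A := [set y | f y = 1].
have [m Am m_min] : exists2 m, A m & forall y, A y -> `|m| <= `|y|.
  apply: min_norm_exists; first exact: convex_linfun_level.
    exact: (closed_linfun_level flin fM).
  by exists ((f e)^-1 *: e); rewrite /A /= linfunZ // mulVf //; apply/eqP.
(* m is the metric projection of 0 onto the affine hyperplane A = m + ker f *)
have m_perp z : f z = 0 -> ip m z = 0.
  move=> fz; have proj0 : is_metric_proj A 0 m.
    by split=> // y Ay; rewrite !sub0r !normrN m_min.
  have Ams s : A (m + s *: z) by rewrite /A /= linfunD // linfunZ // fz mulr0 addr0.
  have cvxA : convex_subset A := convex_linfun_level flin (a := 1).
  have := metric_proj_obtuse hip cvxA proj0 (Ams 1).
  have := metric_proj_obtuse hip cvxA proj0 (Ams (-1)).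
  rewrite !sub0r !(addrC m) !addrK !(ipNl hip) !(ipZr hip); lra.
have m0 : `|m| ^+ 2 != 0.
  rewrite sqrf_eq0 normr_eq0; apply/eqP => m0.
  by move: Am; rewrite /A /= m0 (linfun0 flin); lra.
exists ((`|m| ^+ 2)^-1 *: m) => y; rewrite (ipZl hip).
have := m_perp (y - f y *: m); rewrite linfunB // linfunZ // Am mulr1 subrr.
rewrite (ipBr hip) (ipZr hip) (ipnorm hip) => /(_ erefl)/eqP; rewrite subr_eq0 => /eqP ->.
by rewrite mulrCA mulVf ?mulr1.
Qed.

Lemma weakly_converges_of_ip_cvgn (x : nat -> H) (M : R) :
  (forall n, `|x n| <= M) -> (forall y, cvgn (fun n => ip (x n) y)) ->
  weakly_converges ip x.
Proof.
move=> xM xc; pose f y := lim ((fun n => ip (x n) y) @ \oo).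
have fcvg y : (fun n => ip (x n) y) @ \oo --> f y := xc y.
have flin a y z : f (a *: y + z) = a * f y + f z.
  apply/cvg_lim; first exact: Rhausdorff.
  rewrite (_ : (fun n => _) = (fun n => a * ip (x n) y + ip (x n) z)).
    by apply: cvgD; [apply: cvgM; [exact: cvg_cst | exact: fcvg] | exact: fcvg].
  by apply/funext => n; rewrite (ipDr hip) (ipZr hip).
have fM y : `|f y| <= M * `|y|.
  have xyM n : `|ip (x n) y| <= M * `|y|.
    by apply: le_trans (cauchy_schwarz hip _ _) _; rewrite ler_wpM2r.
  rewrite ler_norml; apply/andP; split; [apply: limr_ge | apply: limr_le] => //;
    by near=> n; have := xyM n; rewrite ler_norml => /andP[].
have [l fl] := riesz_representation flin fM.
by exists l => y; rewrite -fl.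
Unshelve. all: by end_near.
Qed.

End Riesz.

Definition linear_subset (R : realType) (H : normedModType R) (D : set H) :=
  D 0 /\ forall a y z, D y -> D z -> D (a *: y + z).

Lemma linear_subset_affine_hullB (R : realType) (H : normedModType R)
    (A D : set H) (c0 : H) :
  linear_subset D -> (forall c, A c -> D (c - c0)) ->
  forall z, affine_hull A z -> D (z - c0).
Proof.
move=> [D0 DZD] AD _ [n [p [w [Ap w1 ->]]]].
have -> : \sum_(i < n) w i *: p i - c0 = \sum_(i < n) w i *: (p i - c0).
  by under [RHS]eq_bigr do rewrite scalerBr; rewrite sumrB -scaler_suml w1 scale1r.
apply: (big_ind D) => //.
  by move=> y z Dy Dz; have := DZD 1 y z Dy Dz; rewrite scale1r.
by move=> i _; have := DZD (w i) _ 0 (AD _ (Ap i)) D0; rewrite addr0.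
Qed.

Section Fejer.
Variables (R : realType) (H : normedModType R) (ip : H -> H -> R).
Hypothesis hip : is_inner_product ip.

Definition fejer_monotone (A : set H) (x : nat -> H) :=
  forall c n, A c -> `|x n.+1 - c| <= `|x n - c|.

Lemma remote_projections_fejer (Omega : Type) (C : Omega -> set H) t x0 x :
  (forall a, convex_subset (C a)) -> remote_projections C t x0 x ->
  fejer_monotone (\bigcap_a C a) x.
Proof.
move=> cvxC [_ _ _ [alpha hal]] c n Cc.
exact: (metric_proj_fejer hip (cvxC (alpha n)) (hal n).2 (Cc _ I)).
Qed.

Variables (A : set H) (x : nat -> H).
Hypothesis fejA : fejer_monotone A x.

Lemma fejer_dist_le c n : A c -> `|x n - c| <= `|x 0 - c|.
Proof. by move=> Ac; elim: n => // n; apply: le_trans (fejA n Ac). Qed.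

Lemma fejer_bounded c n : A c -> `|x n| <= `|x 0 - c| + `|c|.
Proof.
move=> Ac; apply: le_trans (lerD (fejer_dist_le n Ac) (lexx _)).
by rewrite -{1}(subrK c (x n)) ler_normD.
Qed.

Lemma fejer_cvgn_dist c : A c -> cvgn (fun n => `|x n - c|).
Proof.
move=> Ac; apply: nonincreasing_is_cvgn.
  by apply/nonincreasing_seqP => n; exact: fejA.
by exists 0 => _ [n _ <-].
Qed.

Lemma fejer_cvgn_ipB c c' : A c -> A c' -> cvgn (fun n => ip (x n) (c - c')).
Proof.
move=> Ac Ac'; pose sq d n := `|x n - d| ^+ 2.
have sq_cvg d : A d -> cvgn (sq d).
  by move=> Ad; apply: is_cvgM; exact: fejer_cvgn_dist.
have -> : (fun n => ip (x n) (c - c')) =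
    (fun n => (sq c' n - sq c n - `|c'| ^+ 2 + `|c| ^+ 2) / 2).
  by apply: funext => n; rewrite /sq !(normB_sqr hip) (ipBr hip); field.
apply: is_cvgM; last exact: is_cvg_cst.
apply: is_cvgD; last exact: is_cvg_cst.
apply: is_cvgB; last exact: is_cvg_cst.
by apply: is_cvgB; exact: sq_cvg.
Qed.

End Fejer.

Section InnerProductConvergence.
Variables (R : realType) (H : normedModType R) (ip : H -> H -> R).
Hypothesis hip : is_inner_product ip.
Variable x : nat -> H.

Lemma linear_subset_ip_cvgn : linear_subset [set y | cvgn (fun n => ip (x n) y)].
Proof.
split=> [|a y z /= yc zc].
  rewrite /= (_ : (fun n => _) = cst 0); first exact: is_cvg_cst.
  by apply/funext => n; rewrite (ip0r hip).
rewrite (_ : (fun n => _) = (fun n => a * ip (x n) y + ip (x n) z)).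
  by apply: is_cvgD => //; apply: is_cvgM => //; exact: is_cvg_cst.
by apply/funext => n; rewrite (ipDr hip) (ipZr hip).
Qed.

Variable M : R.
Hypothesis xM : forall n, `|x n| <= M.

Lemma ip_cvgn_of_approx :
  (forall y e, 0 < e -> exists2 z, cvgn (fun n => ip (x n) z) & `|y - z| < e) ->
  forall y, cvgn (fun n => ip (x n) y).
Proof.
move=> approx y; apply: (@cauchy_cvgn _ R^o) => e e0.
have M0 : 0 <= M := le_trans (normr_ge0 _) (xM 0).
have M1 : 0 < 4 * (M + 1) by lra.
have r0 : 0 < e / (4 * (M + 1)) by rewrite divr_gt0.
have [z zc yz] := approx y _ r0.
have [N _ hN] := cvgr_dist_lt _ _ zc (e / 4) (divr_gt0 e0 (ltr0n _ 4)).
exists N => n Nn.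
have close k : `|ip (x k) y - ip (x k) z| <= e / 4.
  rewrite -(ipBr hip); apply: le_trans (cauchy_schwarz hip _ _) _.
  apply: le_trans (ler_pM (normr_ge0 _) (normr_ge0 _) (xM k) (ltW yz)) _.
  by rewrite mulrA ler_pdivrMr //; nra.
move: (hN N (leqnn N)) (hN n Nn) (close N) (close n).
rewrite !ltr_norml !ler_norml => /andP[? ?] /andP[? ?] /andP[? ?] /andP[? ?].
lra.
Qed.

End InnerProductConvergence.

Unset Implicit Arguments.

Theorem mainTheorem7 (R : realType) (H : completeNormedModType R)
  (ip : H -> H -> R) (Omega : Type) (C : Omega -> set H) :
  is_inner_product ip ->
  (exists a b : Omega, a <> b) ->
  (forall a, closed (C a) /\ convex_subset (C a)) ->
  (\bigcap_a C a) !=set0 ->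
  dense (affine_hull (\bigcap_a C a)) ->
  forall (x0 : H) (t : nat -> R) (x : nat -> H),
    remote_projections C t x0 x -> weakly_converges ip x.
Proof.
move=> hip _ hC [c0 Cc0] hdense x0 t x hx.
have fej := remote_projections_fejer hip (fun a => (hC a).2) hx.
have xM := fun n => fejer_bounded fej n Cc0.
have hull : forall z, affine_hull (\bigcap_a C a) z ->
    cvgn (fun n => ip (x n) (z - c0)).
  apply: (linear_subset_affine_hullB (linear_subset_ip_cvgn hip x)) => c Cc /=.
  exact (fejer_cvgn_ipB hip fej Cc Cc0).
apply: (weakly_converges_of_ip_cvgn hip xM).
apply: (ip_cvgn_of_approx hip xM) => y e e0.
have [z [yz hz]] :=
  hdense (ball (y + c0) e) (ex_intro _ (y + c0) (ballxx _ e0)) (ball_open _ _).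
exists (z - c0); first exact: hull.
by move: yz; rewrite -ball_normE /= opprB addrA (addrAC y).
Qed.
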